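(* Let $n\ge 3$. For every integer $m\ge 3$, the map $d'_m:\mathcal{C}_n\times\mathcal{C}_n\to\mathbb{R}$ is a metric on $\mathcal{C}_n$ (in particular, the quotient defining it is finite).
   Context: For $n\ge1$ let $[n]=\{1,\dots,n\}$. A contact structure of length $n$ is a simple undirected graph $\Gamma=([n],Q)$ (no self-loops, no multiple edges) such that $\{i,i+1\}\notin Q$ for every $i$; its edges are called contacts, written $i\cdot j$. $\mathcal{C}_n$ is the set of all contact structures of length $n$. $\mathbb{F}_2=\mathbb{Z}/2\mathbb{Z}$. The edge ideal $I_\Gamma$ of $\Gamma=([n],Q)$ is the ideal of $\mathbb{F}_2[x_1,\dots,x_n]$ generated by $\{x_ix_j:i\cdot j\in Q\}$. For $m\ge3$ let $R_{n,m}=\mathbb{F}_2[x_1,\dots,x_n]/\langle \text{all monomials of total degree } m\rangle$ and $\pi_m$ the quotient map; for an ideal $I$, $\pi_m(I)$ is its image, an additive subgroup of $R_{n,m}$. Define $d'_m(\Gamma_1,\Gamma_2)=\log_2\Bigl|\dfrac{\pi_m(I_{\Gamma_1})+\pi_m(I_{\Gamma_2})}{\pi_m(I_{\Gamma_1})\cap\pi_m(I_{\Gamma_2})}\Bigr|$, the base-2 logarithm of the cardinality of the quotient of additive groups. *)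

From HB Require Import structures.
From mathcomp Require Import all_boot all_algebra.
From mathcomp Require Import mpoly.
From Stdlib Require Import ClassicalEpsilon.
From Stdlib Require Rdefinitions Raxioms Rfunctions Rpower.

Set Implicit Arguments.
Unset Strict Implicit.
Unset Printing Implicit Defensive.

Import GRing.Theory.
Local Open Scope ring_scope.

(* Vertices [n] = {1,...,n} are represented by 'I_n = {0,...,n-1}
   (vertex k+1 <-> ordinal k).  An edge (contact) i.j is the 2-element
   set {i, j}; a graph on [n] is its set of edges. *)

Definition is_contact_structure (n : nat) (Q : {set {set 'I_n}}) : bool :=
  [forall e in Q,
     (#|e| == 2)%N &&
     ~~ [exists i : 'I_n, exists j : 'I_n,
           (nat_of_ord j == (nat_of_ord i).+1)%N && (e == [set i; j])]].

Definition edge_monomial (n : nat) (e : {set 'I_n}) : {mpoly 'F_2[n]} :=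
  \prod_(i in e) 'X_i.

Definition in_edge_ideal (n : nat) (Q : {set {set 'I_n}})
  (p : {mpoly 'F_2[n]}) : Prop :=
  exists c : {set 'I_n} -> {mpoly 'F_2[n]},
    p = \sum_(e in Q) c e * edge_monomial e.

(* R_{n,m} = F_2[x]/<all monomials of degree m>.  The monomials of degree
   < m form an F_2-basis of R_{n,m}, so (as an additive group) R_{n,m} is
   the group of F_2-valued functions on monomials of degree < m, and the
   quotient map pi_m sends p to its coefficients on those monomials. *)
Definition Rnm (n m : nat) := {ffun 'X_{1..n < m} -> 'F_2}.

Definition pi_m (n m : nat) (p : {mpoly 'F_2[n]}) : Rnm n m :=
  [ffun b : 'X_{1..n < m} => p@_(bmnm b)].

Definition asb (P : Prop) : bool :=
  if excluded_middle_informative P then true else false.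

Definition pi_ideal (n m : nat) (Q : {set {set 'I_n}}) : {set Rnm n m} :=
  [set x : Rnm n m | asb (exists p, in_edge_ideal Q p /\ pi_m m p = x)].

Definition set_add (G : finType) (addG : G -> G -> G) (A B : {set G}) : {set G} :=
  [set addG a b | a in A, b in B].

Definition cosets (G : finType) (addG : G -> G -> G) (S C : {set G}) :
  {set {set G}} :=
  [set [set addG x c | c in C] | x in S].

Definition log2 (x : Rdefinitions.R) : Rdefinitions.R :=
  Rdefinitions.Rdiv (Rpower.ln x) (Rpower.ln (Rdefinitions.IZR (BinNums.Zpos (BinNums.xO BinNums.xH)))).

Definition dprime (n m : nat) (Q1 Q2 : {set {set 'I_n}}) : Rdefinitions.R :=
  let A1 := pi_ideal m Q1 in
  let A2 := pi_ideal m Q2 in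
  log2 (Raxioms.INR
          #|cosets (fun x y : Rnm n m => x + y)
                   (set_add (fun x y : Rnm n m => x + y) A1 A2)
                   (A1 :&: A2)|).

Definition is_metric_on_contact (n : nat)
  (d : {set {set 'I_n}} -> {set {set 'I_n}} -> Rdefinitions.R) : Prop :=
  (forall Q1 Q2, is_contact_structure Q1 -> is_contact_structure Q2 ->
     Rdefinitions.Rle (Rdefinitions.IZR BinNums.Z0) (d Q1 Q2)) /\
  (forall Q1 Q2, is_contact_structure Q1 -> is_contact_structure Q2 ->
     (d Q1 Q2 = Rdefinitions.IZR BinNums.Z0 <-> Q1 = Q2)) /\
  (forall Q1 Q2, is_contact_structure Q1 -> is_contact_structure Q2 ->
     d Q1 Q2 = d Q2 Q1) /\
  (forall Q1 Q2 Q3, is_contact_structure Q1 -> is_contact_structure Q2 ->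
     is_contact_structure Q3 ->
     Rdefinitions.Rle (d Q1 Q3) (Rdefinitions.Rplus (d Q1 Q2) (d Q2 Q3))).


(* The sets [A_i = pi_m(I_{Gamma_i})] are subgroups of the finite abelian group
   [R_{n,m}], and [2 ^ d'_m] is the index of [A_1 :&: A_2] in [A_1 + A_2], which
   by the product formula is [|A_1 + A_2| ^ 2 / (|A_1| |A_2|)].  The triangle
   inequality thus reduces to [|A_1 + A_3| |A_2| <= |A_1 + A_2| |A_2 + A_3|]:
   apply the product formula to [A_1 + A_2] and [A_2 + A_3], whose sum contains
   [A_1 + A_3] and whose intersection contains [A_2].  Definiteness holds because
   for [m >= 3] the degree-2 monomials survive in [R_{n,m}], and the coefficient
   of [x_i x_j] vanishes on [I_Gamma] unless [i.j] is a contact. *)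

From Stdlib Require Import ClassicalEpsilon Reals Lra.
From HB Require Import structures.
From mathcomp Require Import all_boot all_algebra fingroup mpoly.

Set Implicit Arguments.
Unset Strict Implicit.
Unset Printing Implicit Defensive.

Import GRing.Theory.

Section JoinIndex.
Variable gT : finGroupType.
Implicit Types G H K : {group gT}.

Lemma index_joinIC G H : #|G <*> H : G :&: H|%g = #|H <*> G : H :&: G|%g.
Proof. by rewrite joingC setIC. Qed.

Lemma index_joinI_eq1 G H : (#|G <*> H : G :&: H|%g == 1) = (G :==: H).
Proof. by rewrite indexg_eq1 join_subG !subsetI !subxx andbT eqEsubset. Qed.

Lemma index_joinI_id G : #|G <*> G : G :&: G|%g = 1.
Proof. by apply/eqP; rewrite index_joinI_eq1. Qed.

Hypothesis abelT : abelian [set: gT].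

Lemma abelian_joingE G H : (G <*> H)%g = (G * H)%g.
Proof.
apply/comm_joingE/normC; apply: subset_trans (subsetT G) _.
exact: sub_abelian_norm abelT (subsetT H).
Qed.

Lemma index_joinI_sqr G H :
  #|G <*> H : G :&: H|%g * (#|G| * #|H|) = #|(G <*> H)%g| ^ 2.
Proof.
have sIJ : G :&: H \subset (G <*> H)%g by rewrite subIset // joing_subl.
move: (Lagrange sIJ) => /= cardJ.
by rewrite mul_cardG -abelian_joingE -mulnn -{2}cardJ mulnCA mulnC [_ * #|_ :&: _|]mulnC.
Qed.

Lemma card_join_join_le G H K :
  #|(G <*> K)%g| * #|H| <= #|(G <*> H)%g| * #|(H <*> K)%g|.
Proof.
rewrite [X in _ <= X]mul_cardG -abelian_joingE.
rewrite leq_mul ?subset_leq_card //.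
  rewrite join_subG (subset_trans (joing_subl G H)) ?joing_subl //.
  by rewrite (subset_trans (joing_subr H K)) ?joing_subr.
by rewrite subsetI joing_subr joing_subl.
Qed.

Lemma index_joinI_triangle G H K :
  #|G <*> K : G :&: K|%g <= #|G <*> H : G :&: H|%g * #|H <*> K : H :&: K|%g.
Proof.
have cards_gt0 : 0 < #|G| * #|H| * (#|H| * #|K|) by rewrite !muln_gt0 !cardG_gt0.
rewrite -(leq_pmul2r cards_gt0) [X in _ <= X]mulnACA !index_joinI_sqr -expnMn.
rewrite [#|H| * #|K|]mulnC mulnACA mulnA index_joinI_sqr mulnn -expnMn.
by rewrite leq_exp2r // card_join_join_le.
Qed.

End JoinIndex.

Lemma card_contact_edge n (Q : {set {set 'I_n}}) :
  is_contact_structure Q -> {in Q, forall e : {set 'I_n}, #|e| = 2}.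
Proof. by move=> /forall_inP contactQ e /contactQ /andP [/eqP]. Qed.

Local Open Scope ring_scope.

Section EdgeIdeal.
Variable n : nat.
Implicit Types (e f : {set 'I_n}) (Q : {set {set 'I_n}}) (p q : {mpoly 'F_2[n]}).

Definition edge_mnm e : 'X_{1..n} := (\sum_(i in e) U_(i))%MM.

Lemma edge_mnmE e i : edge_mnm e i = (i \in e).
Proof.
rewrite /edge_mnm mnm_sumE; have [ie | nie] := boolP (i \in e).
  rewrite (bigD1 i) //= mnm1E eqxx big1 // => k /andP [_ ki].
  by rewrite mnm1E (negbTE ki).
by rewrite big1 // => k ke; rewrite mnm1E; case: eqP => // ki; rewrite -ki ke in nie.
Qed.

Lemma mdeg_edge_mnm e : mdeg (edge_mnm e) = #|e|.
Proof. by rewrite mdeg_sum -sum1_card; apply: eq_bigr => i _; rewrite mdeg1. Qed.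

Lemma edge_monomialE e : edge_monomial e = 'X_[edge_mnm e].
Proof. by rewrite /edge_monomial /edge_mnm (big_morph _ (@mpolyXD _ _) (@mpolyX0 _ _)). Qed.

(* Every monomial of [q * x_f] is divisible by [x_f]. *)
Lemma mcoeff_mul_edge_monomial q e f :
  #|f| = #|e| -> f != e -> (q * edge_monomial f)@_(edge_mnm e) = 0.
Proof.
move=> card_fe; apply: contraNeq; rewrite -mcoeff_msupp edge_monomialE.
rewrite (perm_mem (msuppMX q (edge_mnm f))) => /mapP [mu _ mu_e].
have sub_fe : f \subset e.
  apply/subsetP => i fi; have := congr1 (fun nu : 'X_{1..n} => nu i) mu_e.
  by rewrite /= mnmDE !edge_mnmE fi; case: (i \in e).
by rewrite eqEcard sub_fe card_fe leqnn.
Qed.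

Lemma mcoeff_edge_ideal Q p e :
  {in Q, forall f, #|f| = #|e|} -> in_edge_ideal Q p -> e \notin Q ->
  p@_(edge_mnm e) = 0.
Proof.
move=> cardQ [c ->] eNQ; rewrite raddf_sum /=; apply: big1 => f fQ.
apply: mcoeff_mul_edge_monomial; first exact: cardQ.
by apply: contraNneq eNQ => <-.
Qed.

Lemma edge_monomial_in_ideal Q e : e \in Q -> in_edge_ideal Q (edge_monomial e).
Proof.
move=> eQ; exists (fun f => (f == e)%:R); rewrite (bigD1 e) //= eqxx mul1r.
by rewrite big1 ?addr0 // => f /andP [_ /negbTE ->]; rewrite mul0r.
Qed.

Lemma in_edge_ideal0 Q : in_edge_ideal Q 0.
Proof. by exists (fun _ => 0); rewrite big1 // => e _; rewrite mul0r. Qed.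

Lemma in_edge_idealD Q p q :
  in_edge_ideal Q p -> in_edge_ideal Q q -> in_edge_ideal Q (p + q).
Proof.
move=> [c ->] [d ->]; exists (fun e => c e + d e).
by rewrite -big_split; apply: eq_bigr => e _; rewrite mulrDl.
Qed.

End EdgeIdeal.

(* Addition makes [R_{n,m}] a finite group, so that [set_add] and [cosets]
   become the group-theoretic set product and left cosets. *)
HB.instance Definition _ n m := Finite.on (Rnm n m).
HB.instance Definition _ n m := [finGroupMixin of Rnm n m for +%R].

Section PiIdeal.
Variables n m : nat.
Implicit Types Q : {set {set 'I_n}}.

Lemma abelian_Rnm : abelian [set: Rnm n m].
Proof. by apply/centsP => x _ y _; apply: addrC. Qed.

Lemma pi_m0 : pi_m m (0 : {mpoly 'F_2[n]}) = 0.
Proof. by apply/ffunP => b; rewrite !ffunE mcoeff0. Qed.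

Lemma pi_mD (p q : {mpoly 'F_2[n]}) : pi_m m (p + q) = pi_m m p + pi_m m q.
Proof. by apply/ffunP => b; rewrite !ffunE mcoeffD. Qed.

Lemma in_pi_ideal Q x :
  x \in pi_ideal m Q <-> exists p, in_edge_ideal Q p /\ pi_m m p = x.
Proof. by rewrite inE /asb; case: excluded_middle_informative. Qed.

Lemma group_set_pi_ideal Q : group_set (pi_ideal m Q : {set Rnm n m}).
Proof.
apply/group_setP; split.
  by apply/in_pi_ideal; exists 0; split; [apply: in_edge_ideal0 | apply: pi_m0].
move=> _ _ /in_pi_ideal [p [Ip <-]] /in_pi_ideal [q [Iq <-]].
by apply/in_pi_ideal; exists (p + q); split; [apply: in_edge_idealD | apply: pi_mD].
Qed.

Canonical pi_ideal_group Q := Group (group_set_pi_ideal Q).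

Lemma pi_ideal_subset Q1 Q2 :
  (2 < m)%N -> {in Q1, forall e : {set 'I_n}, #|e| = 2} ->
  {in Q2, forall e : {set 'I_n}, #|e| = 2} ->
  pi_ideal m Q1 \subset pi_ideal m Q2 -> Q1 \subset Q2.
Proof.
move=> m_gt2 cardQ1 cardQ2 /subsetP sub12; apply/subsetP => e eQ1; apply: contraT => eNQ2.
have deg_e : (mdeg (edge_mnm e) < m)%N by rewrite mdeg_edge_mnm cardQ1.
have /sub12 /in_pi_ideal [p [Ip pi_p]] : pi_m m (edge_monomial e) \in pi_ideal m Q1.
  by apply/in_pi_ideal; exists (edge_monomial e); split; first exact: edge_monomial_in_ideal.
have := congr1 (fun x : Rnm n m => x (BMultinom deg_e)) pi_p; rewrite !ffunE /=.
rewrite (mcoeff_edge_ideal _ Ip eNQ2); last by move=> f /cardQ2 ->; rewrite cardQ1.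
by rewrite edge_monomialE mcoeffX eqxx => /eqP; rewrite eq_sym oner_eq0.
Qed.

Lemma pi_ideal_inj Q1 Q2 : (2 < m)%N ->
  is_contact_structure Q1 -> is_contact_structure Q2 ->
  pi_ideal m Q1 = pi_ideal m Q2 -> Q1 = Q2.
Proof.
move=> m_gt2 /card_contact_edge cardQ1 /card_contact_edge cardQ2 eqQ12.
by apply/eqP; rewrite eqEsubset !pi_ideal_subset // eqQ12.
Qed.

Lemma dprimeE Q1 Q2 :
  dprime m Q1 Q2 =
  log2 (INR #|pi_ideal_group Q1 <*> pi_ideal_group Q2
               : pi_ideal_group Q1 :&: pi_ideal_group Q2|%g).
Proof. by rewrite -card_lcosets /= abelian_joingE //; apply: abelian_Rnm. Qed.

End PiIdeal.

Section Log2.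
Local Open Scope R_scope.

Lemma ln2_gt0 : 0 < ln 2.
Proof. by rewrite -ln_1; apply: ln_increasing; lra. Qed.

Lemma log2_1 : log2 1 = 0.
Proof. by rewrite /log2 ln_1 /Rdiv Rmult_0_l. Qed.

Lemma log2_le x y : 0 < x -> x <= y -> log2 x <= log2 y.
Proof.
move=> x_gt0 [x_lt_y | <-]; last exact: Rle_refl.
apply: Rmult_le_compat_r; first exact/Rlt_le/Rinv_0_lt_compat/ln2_gt0.
exact/Rlt_le/ln_increasing.
Qed.

Lemma log2_mul x y : 0 < x -> 0 < y -> log2 (x * y) = log2 x + log2 y.
Proof. by move=> x_gt0 y_gt0; rewrite /log2 ln_mult // /Rdiv Rmult_plus_distr_r. Qed.

Lemma log2_eq0 x : 0 < x -> log2 x = 0 -> x = 1.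
Proof.
move=> x_gt0 /Rmult_integral [lnx0 | ]; last by have := Rinv_0_lt_compat _ ln2_gt0; lra.
by apply: ln_inv; rewrite ?ln_1 //; lra.
Qed.

Lemma log2_INR_ge0 k : (0 < k)%N -> 0 <= log2 (INR k).
Proof. by move=> /leP k_gt0; rewrite -log2_1; apply: log2_le; [lra | apply: (le_INR 1)]. Qed.

Lemma log2_INR_eq0 k : (0 < k)%N -> log2 (INR k) = 0 -> k = 1%N.
Proof. by move=> /ltP k_gt0 /log2_eq0 k1; apply: INR_eq; apply: k1; apply: lt_0_INR. Qed.

Lemma log2_INR_le_add a b c : (0 < c)%N -> (c <= a * b)%N ->
  log2 (INR c) <= log2 (INR a) + log2 (INR b).
Proof.
move=> c_gt0 c_le_ab.
have /andP [/ltP a_gt0 /ltP b_gt0] : (0 < a)%N && (0 < b)%N.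
  by rewrite -muln_gt0 (leq_trans c_gt0).
rewrite -log2_mul; try exact: lt_0_INR.
by rewrite -mult_INR; apply: log2_le; [apply/lt_0_INR/ltP | apply/le_INR/leP].
Qed.

End Log2.

Theorem mainTheorem3 (n : nat) (hn : (3 <= n)%N) :
  forall m : nat, (3 <= m)%N -> is_metric_on_contact (@dprime n m).
Proof.
move=> m m_gt2; have abelR := abelian_Rnm n m.
split; [|split; [|split]].
- by move=> Q1 Q2 _ _; rewrite dprimeE; apply/log2_INR_ge0/indexg_gt0.
- move=> Q1 Q2 C1 C2; rewrite dprimeE; split => [|<-].
    move=> /(log2_INR_eq0 (indexg_gt0 _ _)) /eqP; rewrite index_joinI_eq1 => /eqP E.
    exact: pi_ideal_inj m_gt2 C1 C2 E.
  by rewrite index_joinI_id; exact: log2_1.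
- by move=> Q1 Q2 _ _; rewrite !dprimeE index_joinIC.
- move=> Q1 Q2 Q3 _ _ _; rewrite !dprimeE.
  apply: log2_INR_le_add; first exact: indexg_gt0.
  by apply: (index_joinI_triangle abelR).
Qed.
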